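(* For all nonnegative integers $k,l$, \[ \sum_{n=0}^\infty\frac{Q_l(H_{n+1},H_{n+1}^{(2)},\dots,H_{n+1}^{(l)})\,P_k(H_n,H_n^{(2)},\dots,H_n^{(k)})}{(n+1)^2}=\binom{l+k+1}{l}\zeta(l+k+2). \]
   Context: For integers $r\ge1$ and $n\ge0$, $H_n^{(r)}=\sum_{j=1}^n j^{-r}$ (so $H_0^{(r)}=0$) and $H_n=H_n^{(1)}$. $P_0=Q_0=1$ and for $n\ge1$, $P_n(y_1,\dots,y_n)=\sum_{m_1+2m_2+\cdots=n}\frac{(-1)^{m_2+m_4+\cdots}}{m_1!m_2!\cdots}\prod_{i\ge1}(y_i/i)^{m_i}$, $Q_n(y_1,\dots,y_n)=\sum_{m_1+2m_2+\cdots=n}\frac{1}{m_1!m_2!\cdots}\prod_{i\ge1}(y_i/i)^{m_i}$. $\zeta$ is the Riemann zeta function. *)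

From Stdlib Require Import Reals List Arith ClassicalEpsilon.
Open Scope R_scope.

Fixpoint H (r n : nat) : R :=
  match n with
  | O => 0
  | S m => H r m + / (INR (S m)) ^ r
  end.

Fixpoint tuples (len bound : nat) : list (list nat) :=
  match len with
  | O => nil :: nil
  | S l => flat_map (fun a => map (cons a) (tuples l bound)) (seq 0 (S bound))
  end.

(* For m = [m_1; m_2; ...; m_len] (list position j holds m_{j+1}),
   weight_from i m = sum_j (i+j) * m_{...}. *)
Fixpoint weight_from (i : nat) (m : list nat) : nat :=
  match m with
  | nil => O
  | a :: t => (i * a + weight_from (S i) t)%nat
  end.

Fixpoint even_count_from (i : nat) (m : list nat) : nat :=
  match m with
  | nil => O
  | a :: t => ((if Nat.even i then a else O) + even_count_from (S i) t)%nat
  end.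

Fixpoint mono_from (y : nat -> R) (i : nat) (m : list nat) : R :=
  match m with
  | nil => 1
  | a :: t => (y i / INR i) ^ a / INR (fact a) * mono_from y (S i) t
  end.

Definition sumR (l : list R) : R := fold_right Rplus 0 l.

(* Tuples (m_1,...,m_n) of nonnegative integers with m_1 + 2 m_2 + ... + n m_n = n
   (necessarily m_i <= n). *)
Definition partitions_of (n : nat) : list (list nat) :=
  filter (fun m => Nat.eqb (weight_from 1 m) n) (tuples n n).

Definition P (n : nat) (y : nat -> R) : R :=
  sumR (map (fun m => (-1) ^ (even_count_from 1 m) * mono_from y 1 m)
            (partitions_of n)).

Definition Q (n : nat) (y : nat -> R) : R :=
  sumR (map (fun m => mono_from y 1 m) (partitions_of n)).

(* Riemann zeta value: the sum of the series sum_{j>=1} 1/j^s (chosen by epsilon;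
   it is the actual sum whenever the series converges, e.g. for s >= 2). *)
Definition zeta (s : nat) : R :=
  epsilon (inhabits 0) (fun z => infinite_sum (fun j => / (INR (S j)) ^ s) z).

From Stdlib Require Import Reals List Arith Lra Lia ClassicalEpsilon.
Open Scope R_scope.

(* Write y_j = H_n^(j). Then Q_l(y) = h_l(1, 1/2, ..., 1/n) and P_k(y) = e_k(1, 1/2, ..., 1/n)
   (complete and elementary symmetric functions): by Newton's identities, adding t^j to y_j
   multiplies the generating series of the Q_l by 1/(1 - t x) and that of the P_k by 1 + t x.
   So n! P_k(H_n) is a Stirling number of the first kind [stirling1 n k], and
   Q_l(H_(n+1)) / (n+1)! = [hfrac 1 (n+1) l] with [hfrac] as below.
   The n-th term of the series becomes [stirling1 n k * hfrac 1 (n+1) l / (n+1)], and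
   [hfrac n m l - hfrac (n+1) m l = m hfrac n (m+1) l] spreads it, as a telescoping sum over
   N, into a double array [cell k l N n] of nonnegative numbers. Its N-th column sums to
   [C (l+k+1) l / (N+1)^(l+k+2)] by induction on k and l (a Pascal recursion), and summing
   the columns first gives the binomial times zeta. *)

Fixpoint rsum (n : nat) (f : nat -> R) : R :=
  match n with O => 0 | S p => rsum p f + f p end.

Lemma rsum_ext n f g : (forall i, (i < n)%nat -> f i = g i) -> rsum n f = rsum n g.
Proof.
  induction n; simpl; intros Hfg; auto.
  rewrite IHn by (intros; apply Hfg; lia). rewrite Hfg by lia. auto.
Qed.

Lemma rsum_plus n f g : rsum n (fun i => f i + g i) = rsum n f + rsum n g.
Proof. induction n; simpl; [lra|]. rewrite IHn; lra. Qed.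

Lemma rsum_minus n f g : rsum n (fun i => f i - g i) = rsum n f - rsum n g.
Proof. induction n; simpl; [lra|]. rewrite IHn; lra. Qed.

Lemma rsum_scal n c f : rsum n (fun i => c * f i) = c * rsum n f.
Proof. induction n; simpl; [lra|]. rewrite IHn; lra. Qed.

Lemma rsum_zero n f : (forall i, (i < n)%nat -> f i = 0) -> rsum n f = 0.
Proof.
  intros Hf. rewrite (rsum_ext n f (fun _ => 0)) by auto.
  clear Hf. induction n; simpl; lra.
Qed.

Lemma rsum_shift n f : rsum (S n) f = f O + rsum n (fun i => f (S i)).
Proof. induction n; simpl in *; [lra|]. rewrite IHn. lra. Qed.

Lemma rsum_swap n m (f : nat -> nat -> R) :
  rsum n (fun i => rsum m (f i)) = rsum m (fun j => rsum n (fun i => f i j)).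
Proof.
  induction n; simpl.
  - symmetry; apply rsum_zero; auto.
  - rewrite IHn, <- rsum_plus. auto.
Qed.

Lemma rsum_le n f g : (forall i, (i < n)%nat -> f i <= g i) -> rsum n f <= rsum n g.
Proof.
  induction n; simpl; intros Hfg; [lra|].
  assert (rsum n f <= rsum n g) by (apply IHn; intros; apply Hfg; lia).
  specialize (Hfg n ltac:(lia)). lra.
Qed.

Lemma rsum_nonneg n f : (forall i, (i < n)%nat -> 0 <= f i) -> 0 <= rsum n f.
Proof.
  intros Hf. replace 0 with (rsum n (fun _ => 0)) by (apply rsum_zero; auto).
  now apply rsum_le.
Qed.

Lemma rsum_add n m f : rsum (n + m) f = rsum n f + rsum m (fun j => f (n + j)%nat).
Proof.
  induction m; simpl; [rewrite Nat.add_0_r; lra|].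
  rewrite Nat.add_succ_r. simpl. rewrite IHm. lra.
Qed.

Lemma rsum_trunc n m f : (n <= m)%nat -> (forall i, (n <= i)%nat -> f i = 0) -> rsum m f = rsum n f.
Proof.
  intros Hnm Hf. replace m with (n + (m - n))%nat by lia.
  rewrite rsum_add, (rsum_zero (m - n)); [lra|]. intros; apply Hf; lia.
Qed.

Lemma rsum_telescope n f : rsum n (fun i => f i - f (S i)) = f O - f n.
Proof. induction n; simpl; [lra|]. rewrite IHn; lra. Qed.

Lemma INR_fact_S N : INR (fact (S N)) = INR (S N) * INR (fact N).
Proof. now rewrite fact_simpl, mult_INR. Qed.

(** * Newton's identity for Q *)

Lemma sumR_app l1 l2 : sumR (l1 ++ l2) = sumR l1 + sumR l2.
Proof. induction l1; simpl; [lra|]. unfold sumR in *; simpl. rewrite IHl1; lra. Qed.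

Lemma sumR_map_seq n g : sumR (map g (seq 0 n)) = rsum n g.
Proof.
  induction n; [reflexivity|].
  rewrite seq_S, map_app, sumR_app, IHn. unfold sumR; simpl. lra.
Qed.

(* The monomials [mono_from y i m] summed over [m = (m_i, ..., m_(i+L-1))] with entries
   [<= b] and [i m_i + (i+1) m_(i+1) + ... = n]; [Q n y] is [mono_sum y n n 1 n]. *)
Definition mono_sum (y : nat -> R) (L b i n : nat) : R :=
  sumR (map (mono_from y i) (filter (fun m => Nat.eqb (weight_from i m) n) (tuples L b))).

Definition mono_factor (y : nat -> R) (i a : nat) : R := (y i / INR i) ^ a / INR (fact a).

Lemma mono_sum_0 y b i n : mono_sum y 0 b i n = if Nat.eqb n 0 then 1 else 0.
Proof. unfold mono_sum, sumR. destruct n; simpl; lra. Qed.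

Lemma mono_sum_cons y i n a T :
  sumR (map (mono_from y i) (filter (fun m => Nat.eqb (weight_from i m) n) (map (cons a) T)))
  = if Nat.leb (i * a) n then
      mono_factor y i a *
      sumR (map (mono_from y (S i)) (filter (fun t => Nat.eqb (weight_from (S i) t) (n - i * a)) T))
    else 0.
Proof.
  induction T as [|t T IH]; simpl.
  - destruct (Nat.leb (i * a) n); unfold sumR; simpl; lra.
  - destruct (Nat.leb_spec (i * a) n).
    + destruct (Nat.eqb_spec (i * a + weight_from (S i) t) n),
        (Nat.eqb_spec (weight_from (S i) t) (n - i * a)); try lia; auto.
      unfold sumR in *. simpl. rewrite IH. unfold mono_factor. lra.
    + destruct (Nat.eqb_spec (i * a + weight_from (S i) t) n); [lia|auto].
Qed.

Lemma mono_sum_S y L b i n :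
  mono_sum y (S L) b i n =
  rsum (S b) (fun a => if Nat.leb (i * a) n
                       then mono_factor y i a * mono_sum y L b (S i) (n - i * a) else 0).
Proof.
  unfold mono_sum. cbn [tuples]. rewrite <- sumR_map_seq.
  induction (seq 0 (S b)) as [|a s IH]; auto.
  simpl. rewrite filter_app, map_app, sumR_app, IH, mono_sum_cons. reflexivity.
Qed.

Lemma mono_factor_S y i a :
  i <> O -> mono_factor y i (S a) * INR (i * S a) = y i * mono_factor y i a.
Proof.
  intros Hi. unfold mono_factor. rewrite mult_INR, INR_fact_S. simpl pow.
  assert (INR i <> 0) by (apply not_0_INR; auto).
  assert (INR (fact a) <> 0) by apply INR_fact_neq_0.
  assert (INR (S a) <> 0) by (apply not_0_INR; lia).
  field; auto.
Qed.

Lemma mono_factor_0 y i : mono_factor y i 0 = 1.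
Proof. unfold mono_factor. simpl. lra. Qed.

Section MonoSumNewton.
Variables (y : nat -> R) (b : nat).

Lemma mono_sum_newton_head L i n : (1 <= i)%nat -> (n <= b)%nat ->
  rsum (S b) (fun a => if Nat.leb (i * a) n
                       then mono_factor y i a * INR (i * a) * mono_sum y L b (S i) (n - i * a)
                       else 0)
  = if Nat.leb i n then y i * mono_sum y (S L) b i (n - i) else 0.
Proof.
  intros Hi Hb. rewrite rsum_shift, Nat.mul_0_r. change (INR 0) with 0.
  replace (if Nat.leb 0 n then _ else 0) with 0 by (destruct (Nat.leb 0 n); ring).
  rewrite Rplus_0_l.
  destruct (Nat.leb_spec i n) as [Hin|Hin].
  - rewrite mono_sum_S. cbn [rsum].
    destruct (Nat.leb_spec (i * b) (n - i)) as [Hx|Hx]; [nia|].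
    rewrite Rplus_0_r, <- rsum_scal.
    apply rsum_ext; intros a Ha. rewrite Nat.mul_succ_r.
    destruct (Nat.leb_spec (i * a + i) n), (Nat.leb_spec (i * a) (n - i)); try lia; try ring.
    rewrite <- Nat.mul_succ_r, mono_factor_S by lia.
    replace (n - i * S a)%nat with (n - i - i * a)%nat by (rewrite Nat.mul_succ_r; lia). ring.
  - apply rsum_zero.
    intros a Ha. destruct (Nat.leb_spec (i * S a) n); auto. nia.
Qed.

Lemma mono_sum_newton_tail L i n t :
  rsum (S b) (fun a => if Nat.leb (i * a) n then
      mono_factor y i a * (if Nat.leb (S i + t) (n - i * a)
        then y (S i + t)%nat * mono_sum y L b (S i) (n - i * a - (S i + t)) else 0) else 0)
  = if Nat.leb (S i + t) n then y (S i + t)%nat * mono_sum y (S L) b i (n - (S i + t)) else 0.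
Proof.
  destruct (Nat.leb_spec (S i + t) n).
  - rewrite mono_sum_S, <- rsum_scal. apply rsum_ext. intros a Ha.
    destruct (Nat.leb_spec (i * a) n), (Nat.leb_spec (S i + t) (n - i * a)),
      (Nat.leb_spec (i * a) (n - (S i + t))); try lia; try ring.
    replace (n - i * a - (S i + t))%nat with (n - (S i + t) - i * a)%nat by lia. ring.
  - apply rsum_zero. intros a Ha.
    destruct (Nat.leb_spec (i * a) n), (Nat.leb_spec (S i + t) (n - i * a)); try lia; ring.
Qed.

(* Newton's identity [n h_n = sum_t p_t h_(n-t)], for the truncated sums. *)
Lemma mono_sum_newton L : forall i n, (1 <= i)%nat -> (n <= b)%nat ->
  INR n * mono_sum y L b i n =
  rsum L (fun t => if Nat.leb (i + t) n then y (i + t)%nat * mono_sum y L b i (n - (i + t)) else 0).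
Proof.
  induction L as [|L IH]; intros i n Hi Hb.
  { rewrite mono_sum_0. destruct n; simpl; lra. }
  rewrite mono_sum_S, <- rsum_scal.
  rewrite (rsum_ext _ _ (fun a =>
     (if Nat.leb (i * a) n
      then mono_factor y i a * INR (i * a) * mono_sum y L b (S i) (n - i * a) else 0)
     + rsum L (fun t => if Nat.leb (i * a) n then mono_factor y i a *
         (if Nat.leb (S i + t) (n - i * a)
          then y (S i + t)%nat * mono_sum y L b (S i) (n - i * a - (S i + t)) else 0) else 0))).
  2:{ intros a Ha. destruct (Nat.leb_spec (i * a) n).
      - rewrite rsum_scal, <- (IH (S i) (n - i * a)%nat) by lia.
        replace (INR n) with (INR (i * a) + INR (n - i * a)) by (rewrite <- plus_INR; f_equal; lia).
        ring.
      - rewrite rsum_zero; auto. ring. }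
  rewrite rsum_plus, rsum_swap, mono_sum_newton_head by auto.
  rewrite rsum_shift, Nat.add_0_r. f_equal.
  apply rsum_ext. intros t Ht. rewrite mono_sum_newton_tail.
  replace (i + S t)%nat with (S i + t)%nat by lia. reflexivity.
Qed.

Lemma mono_sum_len L : forall i n, (1 <= i)%nat -> (n < i + L)%nat ->
  mono_sum y (S L) b i n = mono_sum y L b i n.
Proof.
  induction L as [|L IH]; intros i n Hi Hn.
  - rewrite mono_sum_S, mono_sum_0, rsum_shift, rsum_zero.
    + rewrite Nat.mul_0_r, Nat.sub_0_r, mono_factor_0, mono_sum_0. simpl. destruct n; simpl; ring.
    + intros a Ha. destruct (Nat.leb_spec (i * S a) n); auto. nia.
  - rewrite mono_sum_S, (mono_sum_S y L). apply rsum_ext. intros a Ha.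
    destruct (Nat.leb_spec (i * a) n); auto. rewrite IH; auto; lia.
Qed.

End MonoSumNewton.

Lemma mono_sum_bound y L : forall b b' i n, (1 <= i)%nat -> (n <= b)%nat -> (n <= b')%nat ->
  mono_sum y L b i n = mono_sum y L b' i n.
Proof.
  induction L as [|L IH]; intros b b' i n Hi Hb Hb'.
  - rewrite !mono_sum_0; auto.
  - assert (Hz : forall a, (S n <= a)%nat -> (i * a <= n)%nat -> False) by (intros; nia).
    rewrite !mono_sum_S, (rsum_trunc (S n) (S b)), (rsum_trunc (S n) (S b')); try lia.
    + apply rsum_ext. intros a Ha. destruct (Nat.leb_spec (i * a) n); auto.
      rewrite (IH b b'); auto; lia.
    + intros a Ha. destruct (Nat.leb_spec (i * a) n); [exfalso; eauto|auto].
    + intros a Ha. destruct (Nat.leb_spec (i * a) n); [exfalso; eauto|auto].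
Qed.

Lemma mono_sum_Q y L b n : (n <= L)%nat -> (n <= b)%nat -> mono_sum y L b 1 n = Q n y.
Proof.
  intros HL Hb. rewrite (mono_sum_bound y L b n) by lia.
  replace L with (n + (L - n))%nat by lia. induction (L - n)%nat as [|d IHd].
  - rewrite Nat.add_0_r. reflexivity.
  - rewrite Nat.add_succ_r, mono_sum_len by lia. exact IHd.
Qed.

Lemma Q_newton n y : INR n * Q n y = rsum n (fun t => y (S t) * Q (n - S t) y).
Proof.
  rewrite <- (mono_sum_Q y n n n), mono_sum_newton by lia.
  apply rsum_ext. intros t Ht. destruct (Nat.leb_spec (1 + t) n); [|lia].
  rewrite mono_sum_Q by lia. reflexivity.
Qed.

(** * Shifting the arguments of P and Q *)

Lemma mono_from_ext y z m : forall i, (forall j, y j = z j) -> mono_from y i m = mono_from z i m.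
Proof. induction m as [|a m IH]; intros i Hyz; simpl; auto. rewrite IH, Hyz; auto. Qed.

Lemma Q_ext n y z : (forall j, y j = z j) -> Q n y = Q n z.
Proof. intros Hyz. unfold Q. f_equal. apply map_ext. intros m. now apply mono_from_ext. Qed.

Lemma Q_0 y : Q 0 y = 1.
Proof. unfold Q, sumR. simpl. ring. Qed.

Lemma mono_from_sign y m : forall i,
  (-1) ^ (even_count_from i m) * mono_from y i m = mono_from (fun j => (-1) ^ (S j) * y j) i m.
Proof.
  induction m as [|a m IH]; intros i; simpl; [ring|].
  rewrite pow_add, <- IH.
  assert (Hsign : ((-1) ^ (S i)) ^ a = (-1) ^ (if Nat.even i then a else O)).
  { destruct (Nat.even_spec i) as [Hev _], (Nat.even i) eqn:Ei.
    - destruct (Hev eq_refl) as [p ->]. now rewrite pow_1_odd.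
    - assert (Ho : Nat.odd i = true) by (unfold Nat.odd; rewrite Ei; auto).
      apply Nat.odd_spec in Ho. destruct Ho as [p ->].
      replace (S (2 * p + 1)) with (2 * S p)%nat by lia. now rewrite pow_1_even, pow1. }
  replace (-1 * (-1) ^ i * y i / INR i) with ((-1) ^ (S i) * (y i / INR i))
    by (simpl; unfold Rdiv; ring).
  rewrite Rpow_mult_distr, Hsign. unfold Rdiv. ring.
Qed.

Lemma P_as_Q n y : P n y = Q n (fun j => (-1) ^ (S j) * y j).
Proof. unfold P, Q. f_equal. apply map_ext. intros m. apply mono_from_sign. Qed.

Definition prev (f : nat -> R) (j : nat) : R := match j with O => 0 | S i => f i end.

Lemma rsum_prev n g f :
  rsum (S n) (fun s => g s * prev f (n - s)) = rsum n (fun s => g s * f (n - S s)%nat).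
Proof.
  simpl. rewrite Nat.sub_diag. simpl. rewrite Rmult_0_r, Rplus_0_r.
  apply rsum_ext. intros s Hs. now replace (n - s)%nat with (S (n - S s)) by lia.
Qed.

(* Adding [t^j] to the j-th argument multiplies the generating function
   [exp (sum_j y_j x^j / j)] of the [Q_n] by [1 / (1 - t x)]. *)
Lemma Q_add_pow y t l :
  Q l (fun j => y j + t ^ j) = Q l y + t * prev (fun j => Q j (fun j => y j + t ^ j)) l.
Proof.
  set (T := fun j => Q j (fun j => y j + t ^ j)). set (Qy := fun j => Q j y).
  change (T l = Qy l + t * prev T l).
  induction l as [l IH] using lt_wf_ind. destruct l as [|p].
  { unfold T, Qy. rewrite !Q_0. simpl. ring. }
  apply (Rmult_eq_reg_l (INR (S p))); [|apply not_0_INR; lia].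
  set (Sy := fun n (f : nat -> R) => rsum n (fun s => y (S s) * f (n - S s)%nat)).
  set (St := fun n (f : nat -> R) => rsum n (fun s => t ^ S s * f (n - S s)%nat)).
  assert (HT : forall n, INR n * T n = Sy n T + St n T).
  { intros n. unfold T at 1. rewrite Q_newton. unfold Sy, St. rewrite <- rsum_plus.
    apply rsum_ext. intros; unfold T; ring. }
  assert (HQy : INR (S p) * Qy (S p) = Sy (S p) T - t * Sy p T).
  { unfold Qy. rewrite Q_newton. unfold Sy.
    rewrite <- (rsum_prev p _ T), <- rsum_scal, <- rsum_minus.
    apply rsum_ext. intros s Hs. simpl (S p - S s)%nat. fold (Qy (p - s)%nat).
    rewrite IH by lia. ring. }
  assert (HSt : St (S p) T = t * T p + t * St p T).
  { unfold St. rewrite rsum_shift, <- rsum_scal. simpl pow.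
    replace (S p - 1)%nat with p by lia. f_equal; [ring|].
    apply rsum_ext. intros s Hs. replace (S p - S (S s))%nat with (p - S s)%nat by lia. ring. }
  rewrite HT, Rmult_plus_distr_l, HQy, HSt. simpl prev.
  replace (St p T) with (INR p * T p - Sy p T) by (rewrite HT; ring).
  rewrite S_INR. ring.
Qed.

(* The factor for the [P_n] is [1 + t x]; it follows from the case of Q with [-t],
   because the alternating signs turn [t^j] into [-(-t)^j]. *)
Lemma P_add_pow y t k :
  P k (fun j => y j + t ^ j) = P k y + t * prev (fun j => P j y) k.
Proof.
  set (z := fun j => (-1) ^ (S j) * y j).
  set (w := fun j => z j - (- t) ^ j).
  assert (Hz : forall j, Q j z = Q j w + - t * prev (fun j => Q j z) j).
  { assert (Hwz : forall j, Q j (fun i => w i + (- t) ^ i) = Q j z)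
      by (intros; apply Q_ext; intros; unfold w; ring).
    intros j. pose proof (Q_add_pow w (- t) j) as E.
    destruct j; simpl prev in *; rewrite !Hwz in E; exact E. }
  rewrite !P_as_Q, (Q_ext _ _ w).
  2:{ intros j. unfold w, z. replace (- t) with (-1 * t) by ring.
      rewrite Rpow_mult_distr. simpl pow. ring. }
  rewrite Hz. destruct k; simpl prev; [ring|]. rewrite P_as_Q. fold z. ring.
Qed.

Lemma P_ext n y z : (forall j, y j = z j) -> P n y = P n z.
Proof. intros Hyz. rewrite !P_as_Q. apply Q_ext. intros j. now rewrite Hyz. Qed.

Lemma Q_S_zero n : Q (S n) (fun _ => 0) = 0.
Proof.
  apply (Rmult_eq_reg_l (INR (S n))); [|apply not_0_INR; lia].
  rewrite Q_newton, rsum_zero; [ring|]. intros; ring.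
Qed.

(** * P and Q at harmonic numbers *)

Lemma H_S r N : H r (S N) = H r N + (/ INR (S N)) ^ r.
Proof. simpl. now rewrite pow_inv. Qed.

(* [stirling1 m k] is the unsigned Stirling number of the first kind [[m+1, k+1]]. *)
Fixpoint stirling1 (m k : nat) : R :=
  match m with
  | O => match k with O => 1 | _ => 0 end
  | S m' => INR (S m') * stirling1 m' k + prev (stirling1 m') k
  end.

Lemma stirling1_S m k : stirling1 (S m) k = INR (S m) * stirling1 m k + prev (stirling1 m) k.
Proof. reflexivity. Qed.

Lemma stirling1_nonneg m k : 0 <= stirling1 m k.
Proof.
  revert k; induction m; intros k; simpl.
  - destruct k; lra.
  - assert (0 <= prev (stirling1 m) k) by (destruct k; simpl; auto; lra).
    assert (0 <= INR (S m) * stirling1 m k) by (apply Rmult_le_pos; [apply pos_INR|auto]).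
    simpl in *. lra.
Qed.

Lemma P_harmonic N k : P k (fun i => H i N) = stirling1 N k / INR (fact N).
Proof.
  revert k. induction N as [|N IHN]; intros k.
  - change (INR (fact 0)) with 1. unfold Rdiv. rewrite Rinv_1, Rmult_1_r, P_as_Q.
    destruct k; [apply Q_0|].
    simpl stirling1. rewrite <- (Q_S_zero k). apply Q_ext. intros; simpl; ring.
  - rewrite (P_ext _ _ (fun i => H i N + (/ INR (S N)) ^ i)) by (intros; apply H_S).
    rewrite P_add_pow, IHN, INR_fact_S.
    assert (HN : INR (S N) <> 0) by (apply not_0_INR; lia).
    assert (HfN : INR (fact N) <> 0) by apply INR_fact_neq_0.
    rewrite stirling1_S. destruct k; simpl prev; [|rewrite IHN]; field; auto.
Qed.

(* [hfrac n m l = h_l(1/n, ..., 1/(n+m-1)) / (n (n+1) ... (n+m-1))], where [h_l] is the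
   complete homogeneous symmetric polynomial of degree l; the recursion in m is
   [h_l(x_0..x_m) = h_l(x_0..x_(m-1)) + x_m h_(l-1)(x_0..x_m)]. *)
Fixpoint hfrac (n m : nat) {struct m} : nat -> R :=
  match m with
  | O => fun l => match l with O => 1 | _ => 0 end
  | S m' => fix row (l : nat) : R :=
      match l with
      | O => hfrac n m' O / INR (n + m')
      | S l' => (hfrac n m' (S l') + row l') / INR (n + m')
      end
  end.

Lemma hfrac_S n m l : hfrac n (S m) l = (hfrac n m l + prev (hfrac n (S m)) l) / INR (n + m).
Proof. destruct l; [|reflexivity]. simpl prev. now rewrite Rplus_0_r. Qed.

Lemma Q_harmonic N l : Q l (fun i => H i N) = INR (fact N) * hfrac 1 N l.
Proof.
  revert l. induction N as [|N IHN]; intros l.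
  - change (INR (fact 0)) with 1. rewrite Rmult_1_l. destruct l; [apply Q_0|].
    simpl hfrac. rewrite <- (Q_S_zero l). apply Q_ext. reflexivity.
  - assert (HN : INR (S N) <> 0) by (apply not_0_INR; lia).
    assert (HfN : INR (fact N) <> 0) by apply INR_fact_neq_0.
    assert (Hext : forall j, Q j (fun i => H i (S N)) = Q j (fun i => H i N + (/ INR (S N)) ^ i))
      by (intros; apply Q_ext; intros; apply H_S).
    rewrite INR_fact_S.
    induction l as [|l IHl]; rewrite Hext, Q_add_pow, IHN, hfrac_S; cbn [prev];
      replace (1 + N)%nat with (S N) by lia.
    + field; auto.
    + rewrite <- Hext, IHl. field; auto.
Qed.

Section Hfrac.
Variable n : nat.
Hypothesis n_pos : (1 <= n)%nat.

Lemma hfrac_1 l : hfrac n 1 l = / INR n ^ S l.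
Proof.
  assert (0 < INR n) by (apply lt_0_INR; lia).
  induction l as [|l IHl]; rewrite hfrac_S, Nat.add_0_r; cbn [prev].
  - simpl. field. lra.
  - rewrite IHl. simpl. field. split; [apply pow_nonzero|]; lra.
Qed.

Lemma hfrac_nonneg m l : 0 <= hfrac n m l.
Proof.
  revert l. induction m as [|m IHm]; intros l; [destruct l; simpl; lra|].
  induction l as [|l IHl]; rewrite hfrac_S; cbn [prev];
    (apply Rmult_le_pos; [|left; apply Rinv_0_lt_compat, lt_0_INR; lia]);
    specialize (IHm (S l)) || specialize (IHm 0%nat); lra.
Qed.

Lemma hfrac_S_sub m l : INR (n + m) * hfrac n (S m) l - prev (hfrac n (S m)) l = hfrac n m l.
Proof. rewrite hfrac_S. assert (0 < INR (n + m)) by (apply lt_0_INR; lia). field. lra. Qed.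

(* Dividing out the first variable: [h_l(x_0..x_m) - x_0 h_(l-1)(x_0..x_m) = h_l(x_1..x_m)]. *)
Lemma hfrac_S_sub_first m : forall l,
  INR n * hfrac n (S m) l - prev (hfrac n (S m)) l = hfrac (S n) m l.
Proof.
  induction m as [|m IHm]; intros l.
  - replace (hfrac (S n) 0 l) with (hfrac n 0 l) by (destruct l; reflexivity).
    rewrite <- (hfrac_S_sub 0 l), Nat.add_0_r. reflexivity.
  - assert (Hc : INR (n + S m) = INR (S n + m)) by (f_equal; lia).
    assert (Hcp : 0 < INR (n + S m)) by (apply lt_0_INR; lia).
    set (A := hfrac n (S (S m))). set (B := hfrac n (S m)).
    set (C' := hfrac (S n) (S m)). set (D := hfrac (S n) m).
    assert (eA : forall j, INR (n + S m) * A j = B j + prev A j).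
    { intros j. unfold A, B. rewrite hfrac_S. field. lra. }
    assert (eC : forall j, INR (n + S m) * C' j = D j + prev C' j).
    { intros j. unfold C', D. rewrite Hc, hfrac_S, <- Hc. field. lra. }
    assert (IHm' : forall j, INR n * B j - prev B j = D j) by (intros; apply IHm).
    change (INR n * A l - prev A l = C' l).
    induction l as [|l IHl]; apply (Rmult_eq_reg_l (INR (n + S m))); try lra;
      rewrite eC; cbn [prev].
    + rewrite <- (IHm' 0%nat). cbn [prev].
      replace (INR (n + S m) * (INR n * A 0%nat - 0))
        with (INR n * (INR (n + S m) * A 0%nat)) by ring.
      rewrite eA. cbn [prev]. ring.
    + rewrite <- IHl, <- (IHm' (S l)). cbn [prev].
      replace (INR (n + S m) * (INR n * A (S l) - A l))
        with (INR n * (INR (n + S m) * A (S l)) - INR (n + S m) * A l) by ring.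
      rewrite !eA. cbn [prev]. ring.
Qed.

Lemma hfrac_telescope m l : hfrac n m l - hfrac (S n) m l = INR m * hfrac n (S m) l.
Proof. rewrite <- (hfrac_S_sub m l), <- (hfrac_S_sub_first m l), plus_INR. ring. Qed.

End Hfrac.

Lemma hfrac_le_first n m l : (1 <= n)%nat -> hfrac n m l <= hfrac 1 m l.
Proof.
  induction n as [|n IHn]; intros Hn; [lia|]. destruct n; [lra|].
  apply Rle_trans with (hfrac (S n) m l); [|apply IHn; lia].
  assert (E := hfrac_telescope (S n) ltac:(lia) m l).
  assert (0 <= INR m * hfrac (S n) (S m) l)
    by (apply Rmult_le_pos; [apply pos_INR|apply hfrac_nonneg; lia]).
  lra.
Qed.

Lemma hfrac_S_le n m l : (1 <= n)%nat -> INR n * hfrac n (S m) l <= rsum (S l) (hfrac 1 m).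
Proof.
  intros Hn. assert (1 <= INR n) by (apply (le_INR 1); lia).
  induction l as [|l IHl].
  - pose proof (hfrac_S_sub_first n Hn m 0) as E; cbn [prev rsum] in *.
    assert (hfrac (S n) m 0 <= hfrac 1 m 0) by (apply hfrac_le_first; lia). lra.
  - pose proof (hfrac_S_sub_first n Hn m (S l)) as E; cbn [prev rsum] in *.
    assert (hfrac (S n) m (S l) <= hfrac 1 m (S l)) by (apply hfrac_le_first; lia).
    assert (0 <= hfrac n (S m) l) by (apply hfrac_nonneg; lia).
    nra.
Qed.

(** * Series of nonnegative terms *)

Lemma Un_cv_const c : Un_cv (fun _ => c) c.
Proof. intros e He. exists O. intros. unfold Rdist. rewrite Rminus_diag, Rabs_R0. lra. Qed.

Lemma Un_cv_S u l : Un_cv u l <-> Un_cv (fun n => u (S n)) l.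
Proof.
  split; intros Hu e He; destruct (Hu e He) as [N HN].
  - exists N. intros n Hn. apply HN. lia.
  - exists (S N). intros n Hn. destruct n as [|n]; [lia|]. apply HN. lia.
Qed.

Lemma Un_cv_le_const u l B : Un_cv u l -> (forall n, u n <= B) -> l <= B.
Proof. intros Hu Hb. exact (Rle_cv_lim Hb Hu (Un_cv_const B)). Qed.

Lemma Un_cv_ge_const u l B : Un_cv u l -> (forall n, B <= u n) -> B <= l.
Proof. intros Hu Hb. exact (Rle_cv_lim Hb (Un_cv_const B) Hu). Qed.

Lemma Un_cv_squeeze0 u v : (forall n, 0 <= u n <= v n) -> Un_cv v 0 -> Un_cv u 0.
Proof.
  intros Hb Hv e He. destruct (Hv e He) as [N HN]. exists N. intros n Hn.
  specialize (HN n Hn). specialize (Hb n). unfold Rdist in *.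
  rewrite Rminus_0_r in *. rewrite Rabs_right in * by lra. lra.
Qed.

Lemma Un_cv_inv_INR_S : Un_cv (fun n => / INR (S n)) 0.
Proof.
  intros e He. destruct (INR_archimed e 1 He) as [N HN]. exists N. intros n Hn.
  unfold Rdist. rewrite Rminus_0_r. assert (0 < INR (S n)) by (apply lt_0_INR; lia).
  rewrite Rabs_right by (left; apply Rinv_0_lt_compat; auto).
  assert (INR N <= INR (S n)) by (apply le_INR; lia).
  apply (Rmult_lt_reg_l (INR (S n))); auto. rewrite Rinv_r by lra. nra.
Qed.

Lemma ln_1_plus_le x : 0 < x -> ln (1 + x) <= x.
Proof.
  intros Hx. destruct (Rle_or_lt (ln (1 + x)) x) as [|Hlt]; auto.
  assert (Hexp : ln (exp x) < ln (1 + x)) by (rewrite ln_exp; auto).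
  apply ln_lt_inv in Hexp; [|apply exp_pos|lra].
  pose proof (exp_ineq1_le x). lra.
Qed.

Lemma rsum_inv_ge_ln a K : 0 < a -> ln (a + INR K) - ln a <= rsum K (fun j => / (a + INR j)).
Proof.
  intros Ha. induction K as [|K IH]; simpl rsum; [rewrite Rplus_0_r; lra|].
  rewrite S_INR. assert (0 < a + INR K) by (pose proof (pos_INR K); lra).
  assert (E : a + (INR K + 1) = (a + INR K) * (1 + / (a + INR K))) by (field; lra).
  assert (0 < / (a + INR K)) by (apply Rinv_0_lt_compat; lra).
  rewrite E, ln_mult by lra. pose proof (ln_1_plus_le (/ (a + INR K))). lra.
Qed.

Lemma rsum_inv_unbounded a B : 0 < a -> exists K, B < rsum K (fun j => / (a + INR j)).
Proof.
  intros Ha. destruct (INR_archimed 1 (exp (B + ln a)) ltac:(lra)) as [K HK].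
  exists K. pose proof (rsum_inv_ge_ln a K Ha). pose proof (pos_INR K).
  assert (Hln : ln (exp (B + ln a)) < ln (a + INR K)) by (apply ln_increasing; [apply exp_pos|lra]).
  rewrite ln_exp in Hln. lra.
Qed.

Definition has_sum (f : nat -> R) (s : R) : Prop := Un_cv (fun n => rsum n f) s.

Lemma infinite_sum_has_sum f s : infinite_sum f s <-> has_sum f s.
Proof.
  assert (Hsum : forall n, sum_f_R0 f n = rsum (S n) f)
    by (induction n; simpl in *; [ring|rewrite IHn; ring]).
  unfold has_sum. rewrite Un_cv_S.
  split; intros Hf e He; destruct (Hf e He) as [N HN]; exists N; intros n Hn;
    specialize (HN n Hn); rewrite ?Hsum in *; auto.
Qed.

Lemma has_sum_ext f g s : (forall n, f n = g n) -> has_sum f s -> has_sum g s.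
Proof.
  intros Hfg. apply Un_cv_ext. intros n. apply rsum_ext. auto.
Qed.

Lemma has_sum_scal c f s : has_sum f s -> has_sum (fun n => c * f n) (c * s).
Proof.
  intros Hf. apply (Un_cv_ext (fun n => c * rsum n f)); [intros; now rewrite rsum_scal|].
  apply CV_mult; auto using Un_cv_const.
Qed.

Lemma has_sum_plus f g s t : has_sum f s -> has_sum g t -> has_sum (fun n => f n + g n) (s + t).
Proof.
  intros Hf Hg. apply (Un_cv_ext (fun n => rsum n f + rsum n g)); [intros; now rewrite rsum_plus|].
  now apply CV_plus.
Qed.

Lemma has_sum_zero : has_sum (fun _ => 0) 0.
Proof. apply (Un_cv_ext (fun _ => 0)); [intros; now rewrite rsum_zero|apply Un_cv_const]. Qed.

Lemma has_sum_telescope f l : Un_cv f l -> has_sum (fun n => f n - f (S n)) (f O - l).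
Proof.
  intros Hf. apply (Un_cv_ext (fun n => f O - f n)); [intros; now rewrite rsum_telescope|].
  apply CV_minus; auto using Un_cv_const.
Qed.

Section NonnegativeSeries.
Variable f : nat -> R.
Hypothesis f_nonneg : forall n, 0 <= f n.

Lemma rsum_growing : Un_growing (fun n => rsum n f).
Proof. intros n. simpl. pose proof (f_nonneg n). lra. Qed.

Lemma rsum_le_has_sum s n : has_sum f s -> rsum n f <= s.
Proof. intros Hf. exact (growing_ineq _ _ rsum_growing Hf n). Qed.

Lemma has_sum_nonneg s : has_sum f s -> 0 <= s.
Proof. intros Hf. apply (Un_cv_ge_const _ _ _ Hf). intros; apply rsum_nonneg; auto. Qed.

Lemma has_sum_bounded B : (forall n, rsum n f <= B) -> exists s, has_sum f s.
Proof.
  intros Hb. destruct (growing_cv _ rsum_growing) as [s Hs]; [|now exists s].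
  exists B. intros x [n ->]. auto.
Qed.

End NonnegativeSeries.

(* The harmonic series diverges, so [c] cannot stay above [g / 2 > 0]. *)
Lemma Un_cv_le_linear_summable (V c : nat -> R) (a s g : R) :
  0 <= a -> (forall M, 0 <= V M) -> has_sum V s ->
  (forall M, c M <= (a + INR M) * V M) -> Un_cv c g -> g <= 0.
Proof.
  intros Ha HV HVs Hc Hcg. destruct (Rle_or_lt g 0) as [|Hg]; auto. exfalso.
  destruct (Hcg (g / 2)) as [M0 HM0]; [lra|].
  set (a' := a + INR (S M0)).
  assert (Ha' : 0 < a') by (unfold a'; pose proof (lt_0_INR (S M0) ltac:(lia)); lra).
  assert (Hlow : forall j, g / 2 * / (a' + INR j) <= V (S M0 + j)%nat).
  { intros j. assert (Hj : 0 < a' + INR j) by (pose proof (pos_INR j); lra).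
    specialize (HM0 (S M0 + j)%nat ltac:(lia)). unfold Rdist in HM0. apply Rabs_def2 in HM0.
    specialize (Hc (S M0 + j)%nat). rewrite plus_INR, <- Rplus_assoc in Hc. fold a' in Hc.
    apply (Rmult_le_reg_l (a' + INR j)); auto.
    replace ((a' + INR j) * (g / 2 * / (a' + INR j))) with (g / 2) by (field; lra). lra. }
  destruct (rsum_inv_unbounded a' ((s + 1) / (g / 2)) Ha') as [J HJ].
  assert (Hs : rsum (S M0 + J) V <= s) by now apply rsum_le_has_sum.
  rewrite rsum_add in Hs.
  assert (0 <= rsum (S M0) V) by (apply rsum_nonneg; auto).
  assert (g / 2 * rsum J (fun j => / (a' + INR j)) <= rsum J (fun j => V (S M0 + j)%nat))
    by (rewrite <- rsum_scal; apply rsum_le; auto).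
  apply (Rmult_lt_compat_l (g / 2)) in HJ; [|lra].
  replace (g / 2 * ((s + 1) / (g / 2))) with (s + 1) in HJ by (field; lra).
  lra.
Qed.

(* The boundary term [c M] tends to 0 by [Un_cv_le_linear_summable]. *)
Lemma has_sum_recurrence (V W c : nat -> R) (x a A : R) :
  0 < x -> 0 <= a ->
  (forall M, 0 <= V M) -> (forall M, 0 <= W M) -> (forall M, 0 <= c M) ->
  (forall M, c M <= (a + INR M) * V M) ->
  (forall M, x * V M = c M - c (S M) + W M) ->
  has_sum W A -> has_sum V ((c O + A) / x).
Proof.
  intros Hx Ha HV HW Hc Hca Hrec HWA.
  assert (Hpartial : forall K, x * rsum K V = c O - c K + rsum K W).
  { intros K. rewrite <- rsum_scal, (rsum_ext _ _ (fun M => (c M - c (S M)) + W M)) by auto.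
    rewrite rsum_plus, rsum_telescope. ring. }
  assert (Hbound : forall K, rsum K V <= (c O + A) / x).
  { intros K. apply (Rmult_le_reg_l x); auto.
    replace (x * ((c O + A) / x)) with (c O + A) by (field; lra).
    rewrite Hpartial. pose proof (rsum_le_has_sum W HW A K HWA). pose proof (Hc K). lra. }
  destruct (has_sum_bounded V HV _ Hbound) as [L HL].
  assert (Hcg : Un_cv c (c O + A - x * L)).
  { apply (Un_cv_ext (fun K => c O + rsum K W - x * rsum K V)); [intros K; rewrite Hpartial; ring|].
    apply CV_minus; [apply CV_plus; auto using Un_cv_const|].
    apply CV_mult; auto using Un_cv_const. }
  assert (0 <= c O + A - x * L) by (apply (Un_cv_ge_const _ _ _ Hcg); auto).
  assert (c O + A - x * L <= 0) by exact (Un_cv_le_linear_summable V c a L _ Ha HV HL Hca Hcg).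
  replace ((c O + A) / x) with L; auto. field_simplify_eq; lra.
Qed.

Section DoubleSeries.
Variables (V : nat -> nat -> R) (r c : nat -> R).
Hypothesis V_nonneg : forall M N, 0 <= V M N.
Hypothesis rows : forall M, has_sum (V M) (r M).
Hypothesis cols : forall N, has_sum (fun M => V M N) (c N).

Lemma rsum_rows_le B : (forall J, rsum J c <= B) -> forall K, rsum K r <= B.
Proof.
  intros HB K.
  apply (Un_cv_le_const (fun J => rsum K (fun M => rsum J (V M)))).
  - induction K as [|K IHK]; simpl; [apply Un_cv_const|]. apply CV_plus; [exact IHK|apply rows].
  - intros J. rewrite rsum_swap. apply Rle_trans with (rsum J c); auto.
    apply rsum_le. intros N _. apply rsum_le_has_sum; auto.
Qed.

End DoubleSeries.

Lemma has_sum_swap (V : nat -> nat -> R) (r c : nat -> R) (T : R) :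
  (forall M N, 0 <= V M N) ->
  (forall M, has_sum (V M) (r M)) -> (forall N, has_sum (fun M => V M N) (c N)) ->
  has_sum c T -> has_sum r T.
Proof.
  intros HV Hr Hc HT.
  assert (Hr0 : forall M, 0 <= r M) by (intros M; apply (has_sum_nonneg (V M)); auto).
  assert (Hc0 : forall N, 0 <= c N) by (intros N; apply (has_sum_nonneg (fun M => V M N)); auto).
  assert (HrT := rsum_rows_le V r c HV Hr Hc T (fun J => rsum_le_has_sum c Hc0 T J HT)).
  destruct (has_sum_bounded r Hr0 T HrT) as [L HL].
  assert (HcL := rsum_rows_le (fun N M => V M N) c r (fun N M => HV M N) Hc Hr L
                   (fun J => rsum_le_has_sum r Hr0 L J HL)).
  assert (L <= T) by now apply (Un_cv_le_const _ _ _ HL).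
  assert (T <= L) by now apply (Un_cv_le_const _ _ _ HT).
  replace T with L by lra. exact HL.
Qed.

Lemma rsum_inv_sq_le K : rsum (S K) (fun j => / INR (S j) ^ 2) <= 2 - / INR (S K).
Proof.
  induction K as [|K IH]; [simpl; lra|].
  change (rsum (S (S K)) ?f) with (rsum (S K) f + f (S K)); cbv beta.
  rewrite (S_INR (S K)). assert (Hx : 1 <= INR (S K)) by (apply (le_INR 1); lia).
  set (x := INR (S K)) in *.
  assert (E : / x - / (x + 1) - / (x + 1) ^ 2 = / (x * (x + 1) ^ 2)) by (field; lra).
  assert (0 < / (x * (x + 1) ^ 2))
    by (apply Rinv_0_lt_compat, Rmult_lt_0_compat; [lra|apply pow_lt; lra]).
  lra.
Qed.

Lemma has_sum_zeta w : (2 <= w)%nat -> has_sum (fun j => / INR (S j) ^ w) (zeta w).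
Proof.
  intros Hw. apply infinite_sum_has_sum. unfold zeta. apply epsilon_spec.
  assert (Hpos : forall j, 0 <= / INR (S j) ^ w)
    by (intros j; left; apply Rinv_0_lt_compat, pow_lt, lt_0_INR; lia).
  assert (Hb : forall K, rsum K (fun j => / INR (S j) ^ w) <= 2).
  { intros K. apply Rle_trans with (rsum K (fun j => / INR (S j) ^ 2)).
    - apply rsum_le. intros j _. assert (1 <= INR (S j)) by (apply (le_INR 1); lia).
      apply Rinv_le_contravar; [apply pow_lt; lra|]. now apply Rle_pow.
    - assert (Hsq : forall j, 0 <= / INR (S j) ^ 2)
        by (intros j; left; apply Rinv_0_lt_compat, pow_lt, lt_0_INR; lia).
      pose proof (rsum_growing _ Hsq K). pose proof (rsum_inv_sq_le K).
      pose proof (Rinv_0_lt_compat _ (lt_0_INR (S K) ltac:(lia))). lra. }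
  destruct (has_sum_bounded _ Hpos 2 Hb) as [s Hs]. exists s. now apply infinite_sum_has_sum.
Qed.

(** * The double array *)

Definition cell (k l N M : nat) : R := stirling1 M k * hfrac (S N) (S (S M)) l.

Definition cell_border (k l N M : nat) : R := stirling1 M k * hfrac (S N) (S M) l.

Lemma cell_nonneg k l N M : 0 <= cell k l N M.
Proof. apply Rmult_le_pos; [apply stirling1_nonneg|apply hfrac_nonneg; lia]. Qed.

Lemma cell_border_nonneg k l N M : 0 <= cell_border k l N M.
Proof. apply Rmult_le_pos; [apply stirling1_nonneg|apply hfrac_nonneg; lia]. Qed.

Lemma cell_rec k l N M :
  INR (S N) * cell k l N M = cell_border k l N M - cell_border k l N (S M)
    + (prev (fun k' => cell k' l N M) k + prev (fun l' => cell k l' N M) l).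
Proof.
  unfold cell_border, cell.
  rewrite stirling1_S, <- (hfrac_S_sub (S N) ltac:(lia) (S M) l), plus_INR.
  destruct k, l; cbn [prev]; ring.
Qed.

Lemma cell_border_le k l N M : cell_border k l N M <= (INR (S N) + 1 + INR M) * cell k l N M.
Proof.
  unfold cell_border, cell. rewrite <- (hfrac_S_sub (S N) ltac:(lia) (S M) l).
  replace (INR (S N + S M)) with (INR (S N) + 1 + INR M) by (rewrite plus_INR, (S_INR M); ring).
  assert (0 <= stirling1 M k * prev (hfrac (S N) (S (S M))) l).
  { apply Rmult_le_pos; [apply stirling1_nonneg|].
    destruct l; cbn [prev]; [lra|apply hfrac_nonneg; lia]. }
  lra.
Qed.

Lemma has_sum_prev (F : nat -> nat -> R) (T : nat -> R) j :
  (forall i, j = S i -> has_sum (F i) (T i)) ->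
  has_sum (fun M => prev (fun i => F i M) j) (prev T j).
Proof.
  destruct j; intros HF; [|now apply HF].
  apply (has_sum_ext (fun _ => 0)); [reflexivity|apply has_sum_zero].
Qed.

Lemma C_n_0 n : C n 0 = 1.
Proof. unfold C. rewrite Nat.sub_0_r. simpl. field. apply INR_fact_neq_0. Qed.

Lemma C_n_n n : C n n = 1.
Proof. unfold C. rewrite Nat.sub_diag. simpl. field. apply INR_fact_neq_0. Qed.

Definition col_sum (k l N : nat) : R := C (l + k + 1) l / INR (S N) ^ (l + k + 2).

(* Pascal's rule, in the shape of [cell_rec] summed over M. *)
Lemma col_sum_rec k l N :
  cell_border k l N 0 + (prev (fun k' => col_sum k' l N) k + prev (fun l' => col_sum k l' N) l)
  = INR (S N) * col_sum k l N.
Proof.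
  assert (Hn : 0 < INR (S N)) by (apply lt_0_INR; lia).
  set (n := INR (S N)) in *.
  assert (Hpow : forall e, n ^ e <> 0) by (intros; apply pow_nonzero; lra).
  unfold cell_border, col_sum. rewrite hfrac_1 by lia. fold n.
  destruct k as [|k], l as [|l]; cbn [prev stirling1].
  - rewrite C_n_0. simpl. field. lra.
  - replace (S l + 0 + 1)%nat with (S (S l)) by lia. replace (l + 0 + 1)%nat with (S l) by lia.
    rewrite <- pascal, C_n_n by lia. replace (S l + 0 + 2)%nat with (S (S (S l))) by lia.
    replace (l + 0 + 2)%nat with (S (S l)) by lia. simpl pow. field. repeat split; auto; lra.
  - rewrite !C_n_0. replace (0 + S k + 2)%nat with (S (0 + k + 2)) by lia.
    simpl pow. field. repeat split; auto; lra.
  - replace (S l + S k + 1)%nat with (S (l + k + 2)) by lia.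
    replace (l + S k + 1)%nat with (l + k + 2)%nat by lia.
    replace (S l + k + 1)%nat with (l + k + 2)%nat by lia.
    rewrite <- (pascal (l + k + 2) l) by lia.
    replace (S l + S k + 2)%nat with (S (S (l + k + 2))) by lia.
    replace (l + S k + 2)%nat with (S (l + k + 2)) by lia.
    replace (S l + k + 2)%nat with (S (l + k + 2)) by lia.
    simpl pow. field. repeat split; auto; lra.
Qed.

Lemma has_sum_col_step k l N :
  (forall k', k = S k' -> has_sum (cell k' l N) (col_sum k' l N)) ->
  (forall l', l = S l' -> has_sum (cell k l' N) (col_sum k l' N)) ->
  has_sum (cell k l N) (col_sum k l N).
Proof.
  intros Hk Hl. assert (Hn : 0 < INR (S N)) by (apply lt_0_INR; lia).
  set (W := fun M => prev (fun k' => cell k' l N M) k + prev (fun l' => cell k l' N M) l).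
  assert (HW : forall M, 0 <= W M).
  { intros M. unfold W.
    pose proof (cell_nonneg (pred k) l N M). pose proof (cell_nonneg k (pred l) N M).
    destruct k, l; cbn [prev pred] in *; lra. }
  replace (col_sum k l N) with ((cell_border k l N 0 +
      (prev (fun k' => col_sum k' l N) k + prev (fun l' => col_sum k l' N) l)) / INR (S N))
    by (rewrite col_sum_rec; field; lra).
  apply (has_sum_recurrence _ W _ _ (INR (S N) + 1)); auto.
  - pose proof (pos_INR (S N)). lra.
  - apply cell_nonneg.
  - apply cell_border_nonneg.
  - apply cell_border_le.
  - apply cell_rec.
  - apply has_sum_plus;
      [apply (has_sum_prev (fun i => cell i l N))|apply (has_sum_prev (fun i => cell k i N))]; auto.
Qed.

Lemma has_sum_col N : forall k l, has_sum (cell k l N) (col_sum k l N).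
Proof.
  intros k. induction k as [|k IHk]; intros l; induction l as [|l IHl];
    apply has_sum_col_step; intros ? [= <-]; auto.
Qed.

Lemma has_sum_row k l M :
  has_sum (fun N => cell k l N M) (stirling1 M k * hfrac 1 (S M) l / INR (S M)).
Proof.
  assert (HM : 0 < INR (S M)) by (apply lt_0_INR; lia).
  set (f := fun N => hfrac (S N) (S M) l).
  assert (Hf : Un_cv f 0).
  { set (B := rsum (S l) (hfrac 1 M)).
    apply Un_cv_squeeze0 with (fun N => B * / INR (S N)).
    - intros N. split; [apply hfrac_nonneg; lia|].
      apply (Rmult_le_reg_l (INR (S N))); [apply lt_0_INR; lia|].
      replace (INR (S N) * (B * / INR (S N))) with B by (field; apply not_0_INR; lia).
      apply hfrac_S_le. lia.
    - rewrite <- (Rmult_0_r B). apply CV_mult; [apply Un_cv_const|apply Un_cv_inv_INR_S]. }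
  apply (has_sum_ext (fun N => stirling1 M k / INR (S M) * (f N - f (S N)))).
  { intros N. unfold f, cell. rewrite hfrac_telescope by lia. field. lra. }
  replace (stirling1 M k * hfrac 1 (S M) l / INR (S M))
    with (stirling1 M k / INR (S M) * (f O - 0)) by (unfold f; field; lra).
  now apply has_sum_scal, has_sum_telescope.
Qed.

Theorem theorem4 (k l : nat) :
  infinite_sum
    (fun n => Q l (fun i => H i (S n)) * P k (fun i => H i n) / (INR (S n)) ^ 2)
    (C (l + k + 1) l * zeta (l + k + 2)).
Proof.
  apply infinite_sum_has_sum.
  apply (has_sum_ext (fun M => stirling1 M k * hfrac 1 (S M) l / INR (S M))).
  { intros n. rewrite Q_harmonic, P_harmonic, INR_fact_S.
    assert (INR (S n) <> 0) by (apply not_0_INR; lia).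
    assert (INR (fact n) <> 0) by apply INR_fact_neq_0.
    field. auto. }
  apply (has_sum_swap (fun M N => cell k l N M) _ (fun N => col_sum k l N)).
  - intros; apply cell_nonneg.
  - intros M. apply has_sum_row.
  - intros N. apply has_sum_col.
  - apply has_sum_scal, has_sum_zeta. lia.
Qed.
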